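(* Let $M^Q(a|x)$ and $N^{Q'}(b|y)$ be PMDs. Then $M^Q(a|x)\succeq N^{Q'}(b|y)$ if and only if $M^Q(a|x)$ can be converted to $N^{Q'}(b|y)$ by a one-way LOCC from Alice to Bob, in the spatial model in which the PMD is regarded as a bipartite channel whose quantum input is held by Alice and whose program input and classical outcome are held by Bob.
   Context: All Hilbert spaces are finite-dimensional and all alphabets are finite. A PMD on $\mathcal{H}^Q$ with program set $\mathcal{X}$ and outcome set $\mathcal{A}$ is a family $\{M^Q(a|x)\}$ of operators on $\mathcal{H}^Q$ with $M^Q(a|x)\ge0$ and $\sum_a M^Q(a|x)=\mathbb{1}^Q$ for every $x$. In the spatial model, such a PMD is a bipartite channel: Alice inputs a quantum state on $\mathcal{H}^Q$, Bob inputs $x$ and receives $a$ with probability $\mathrm{Tr}[\rho M^Q(a|x)]$. A one-way LOCC conversion from Alice to Bob of $M^Q(a|x)$ into a device with Alice's quantum input $\mathcal{H}^{Q'}$, Bob's input $y$ and Bob's output $b$ consists of: a pre-processing by one-way LOCC (Alice to Bob) acting on Alice's input in $\mathcal{H}^{Q'}$ and Bob's input $y$, producing the input on $\mathcal{H}^Q$ for Alice's side of $M$ and the program $x$ on Bob's side; side memories that may be quantum on Alice's side and classical on Bob's side; and a post-processing by one-way LOCC (Alice to Bob) using the side memories and Bob's outcome $a$ to produce $b$; shared randomness is allowed. $M^Q(a|x)\succeq N^{Q'}(b|y)$ means that there exist a probability distribution $\mu(r)$, for each $r$ a quantum instrument $\{\mathcal{E}^{Q'\to Q}_{i|r}\}_i$,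 and conditional probability distributions $p(x|i,y,r)$, $q(b|a,x,i,y,r)$ such that for all $b,y$ \[N^{Q'}(b|y)=\sum_r\mu(r)\sum_{i,x,a}q(b|a,x,i,y,r)\,p(x|i,y,r)\,(\mathcal{E}^{Q'\to Q}_{i|r})^\dagger[M^Q(a|x)],\] with $\mathcal{E}^\dagger$ the adjoint (trace-dual) map. *)

(* Complex scalars: an arbitrary numClosedFieldType C
   (e.g. algC, or complex R for R : rcfType). *)
From HB Require Import structures.
From mathcomp Require Import all_boot all_order all_algebra.
From mathcomp Require Import mxtens.
Set Implicit Arguments.
Unset Strict Implicit.
Unset Printing Implicit Defensive.
Import Order.TTheory GRing.Theory Num.Theory.
Local Open Scope ring_scope.

Section Defs.
Variable C : numClosedFieldType.

Definition adjmx m n (A : 'M[C]_(m, n)) : 'M[C]_(n, m) := (map_mx Num.conj A)^T.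

Definition psd n (A : 'M[C]_n) : Prop :=
  adjmx A = A /\ forall v : 'cV[C]_n, 0 <= (adjmx v *m A *m v) 0 0.

(* probability distribution on a finite set (values real, nonnegative) *)
Definition prob_dist (T : finType) (p : T -> C) : Prop :=
  (forall t, 0 <= p t) /\ \sum_(t : T) p t = 1.

(* PMD on H^Q = C^d with program set X and outcome set A:  M x a = M^Q(a|x) *)
Definition PMD (d : nat) (X A : finType) (M : X -> A -> 'M[C]_d) : Prop :=
  (forall x a, psd (M x a)) /\ (forall x, \sum_(a : A) M x a = 1%:M).

Definition POVM (d : nat) (J : finType) (F : J -> 'M[C]_d) : Prop :=
  (forall j, psd (F j)) /\ \sum_(j : J) F j = 1%:M.

(* A quantum instrument {E_i}_i from C^din to C^dout, each CP map E_i given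
   by Kraus operators K i k (k < m):  E_i(rho) = sum_k K i k rho (K i k)^*.
   Trace preservation of sum_i E_i:  sum_{i,k} (K i k)^* K i k = 1. *)
Definition instrument (din dout : nat) (I : finType) (m : nat)
  (K : I -> 'I_m -> 'M[C]_(dout, din)) : Prop :=
  \sum_(i : I) \sum_(k < m) adjmx (K i k) *m K i k = 1%:M.

Definition instr_adj (din dout : nat) (I : finType) (m : nat)
  (K : I -> 'I_m -> 'M[C]_(dout, din)) (i : I) (Y : 'M[C]_dout) : 'M[C]_din :=
  \sum_(k < m) adjmx (K i k) *m Y *m K i k.

Definition pmd_succeq (dQ dQ' : nat) (X A Y B : finType)
  (M : X -> A -> 'M[C]_dQ) (N : Y -> B -> 'M[C]_dQ') : Prop :=
  exists (Rr : finType) (mu : Rr -> C) (I : finType) (m : nat)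
         (K : Rr -> I -> 'I_m -> 'M[C]_(dQ, dQ'))
         (p : I -> Y -> Rr -> X -> C)
         (q : A -> X -> I -> Y -> Rr -> B -> C),
    prob_dist mu /\
        (forall r, instrument (K r)) /\
        (forall i y r, prob_dist (p i y r)) /\
        (forall a x i y r, prob_dist (q a x i y r)) /\
        (forall y b, N y b =
           \sum_(r : Rr) mu r *:
             \sum_(i : I) \sum_(x : X) \sum_(a : A)
               (q a x i y r b * p i y r x) *: instr_adj (K r) i (M x a)).

(* One-way LOCC conversion (Alice -> Bob) in the spatial model.
   - shared randomness r ~ mu;
   - pre-processing: Alice applies an instrument {E_{i|r}} from her input
     space C^dQ' to C^dQ (x) C^dA (input of M, quantum memory of dimension dA),
     and sends the classical outcome i to Bob; Bob, from y, i, r, draws the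
     program x together with a classical memory value w ~ p(x,w|i,y,r);
   - M is used once: Alice's C^dQ part is fed in, Bob inputs x, gets a;
   - post-processing: Alice measures her quantum memory with a POVM
     {F_{j|i,r}} and sends j to Bob; Bob outputs b ~ q(b|a,x,w,i,j,y,r). *)
Definition oneway_LOCC_convertible (dQ dQ' : nat) (X A Y B : finType)
  (M : X -> A -> 'M[C]_dQ) (N : Y -> B -> 'M[C]_dQ') : Prop :=
  exists (Rr : finType) (mu : Rr -> C) (dA : nat) (I : finType) (m : nat)
         (K : Rr -> I -> 'I_m -> 'M[C]_(dQ * dA, dQ'))
         (W : finType) (p : I -> Y -> Rr -> (X * W)%type -> C)
         (J : finType) (F : Rr -> I -> J -> 'M[C]_dA)
         (q : A -> X -> W -> I -> J -> Y -> Rr -> B -> C),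
    prob_dist mu /\
        (forall r, instrument (K r)) /\
        (forall i y r, prob_dist (p i y r)) /\
        (forall r i, POVM (F r i)) /\
        (forall a x w i j y r, prob_dist (q a x w i j y r)) /\
        (forall y b, N y b =
           \sum_(r : Rr) mu r *:
             \sum_(i : I) \sum_(xw : (X * W)%type) \sum_(a : A) \sum_(j : J)
               (q a xw.1 xw.2 i j y r b * p i y r xw) *:
                 instr_adj (K r) i (tensmx (M xw.1 a) (F r i j))).

End Defs.

From HB Require Import structures.
From mathcomp Require Import all_boot all_order all_algebra mxtens spectral.
Set Implicit Arguments.
Unset Strict Implicit.
Unset Printing Implicit Defensive.
Import Order.TTheory GRing.Theory Num.Theory.
Local Open Scope ring_scope.

(* A conversion in the sense of [pmd_succeq] is a one-way LOCC protocol
   without memories: take a one-dimensional quantum memory measured by the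
   trivial POVM.  Conversely, both memories can be eliminated.  Alice's final
   measurement {F_j} of her memory can be performed already within her
   initial instrument, since its outcome j only enters Bob's post-processing:
   writing F_j = sum_l w_l w_l^*, the instrument with outcomes (i, j) and
   Kraus operators (1 ⊗ w_l^* ) K_k has adjoint Y |-> E_i^dagger(Y ⊗ F_j).
   Bob's classical memory w is averaged out: the marginal of (x, w) becomes
   the program distribution, and the p-weighted average of q over w the
   post-processing. *)

Section Adjoint.
Variable C : numClosedFieldType.

Lemma adjmxK m n (A : 'M[C]_(m, n)) : adjmx (adjmx A) = A.
Proof. by apply/matrixP => i j; rewrite !mxE conjCK. Qed.

Lemma adjmxM m n p (A : 'M[C]_(m, n)) (B : 'M[C]_(n, p)) :
  adjmx (A *m B) = adjmx B *m adjmx A.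
Proof. by rewrite /adjmx map_mxM trmx_mul. Qed.

Lemma adjmx_tens m n p q (A : 'M[C]_(m, n)) (B : 'M[C]_(p, q)) :
  adjmx (A *t B) = adjmx A *t adjmx B.
Proof. by apply/matrixP => i j; rewrite !mxE rmorphM. Qed.

Lemma adjmx1 n : adjmx (1%:M : 'M[C]_n) = 1%:M.
Proof. by apply/matrixP => i j; rewrite !mxE eq_sym rmorphMn rmorph1. Qed.

Lemma adjmx_castmx_conj m m' n (e : m = m') (K : 'M[C]_(m, n)) (Y : 'M[C]_m') :
  adjmx (castmx (e, erefl n) K) *m Y *m castmx (e, erefl n) K
  = adjmx K *m castmx (esym e, esym e) Y *m K.
Proof. by case: m' / e in Y *; rewrite !castmx_id. Qed.

End Adjoint.

Section Tensor.
Variable R : comPzRingType.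

Lemma tensmx_sumr m n p q (I : finType) (A : 'M[R]_(m, n)) (G : I -> 'M[R]_(p, q)) :
  A *t (\sum_i G i) = \sum_i A *t G i.
Proof.
apply/matrixP => i j; rewrite !mxE !summxE mulr_sumr.
by apply: eq_bigr => l _; rewrite !mxE.
Qed.

Lemma tensmx11 m n : (1%:M : 'M[R]_m) *t (1%:M : 'M[R]_n) = 1%:M.
Proof.
apply/matrixP => i j.
case: (mxtens_indexP i) => i1 i2; case: (mxtens_indexP j) => j1 j2.
rewrite tensmxE !mxE (can_eq (@mxtens_indexK _ _)) xpair_eqE.
by case: (i1 == j1); case: (i2 == j2); rewrite ?mulr1 ?mulr0.
Qed.

Lemma tensmx1 m n (Y : 'M[R]_(m, n)) :
  Y *t (1%:M : 'M[R]_1) = castmx (esym (muln1 m), esym (muln1 n)) Y.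
Proof. by rewrite tens_mx_scalar scale1r. Qed.

Lemma castmx1 m m' (e : m = m') : castmx (e, e) (1%:M : 'M[R]_m) = 1%:M.
Proof. by case: m' / e; rewrite castmx_id. Qed.

End Tensor.

Lemma big_mxtens_unindex (V : nmodType) m n (F : 'I_m -> 'I_n -> V) :
  \sum_(k < m * n) F (mxtens_unindex k).1 (mxtens_unindex k).2
  = \sum_(k1 < m) \sum_(k2 < n) F k1 k2.
Proof.
rewrite pair_big /=; symmetry.
apply: (reindex (@mxtens_unindex m n)) => /=.
by exists (@mxtens_index m n) => k _; rewrite (mxtens_indexK, mxtens_unindexK).
Qed.

Lemma sum_pair (V : nmodType) (I J : finType) (F : I * J -> V) :
  \sum_(ij : I * J) F ij = \sum_i \sum_j F (i, j).
Proof. by rewrite pair_big; apply: eq_bigr => -[]. Qed.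

Lemma big_unit (V : nmodType) (F : unit -> V) : \sum_(u : unit) F u = F tt.
Proof. by rewrite (big_pred1 tt) // => -[]. Qed.

Section PositiveSemidefinite.
Variable C : numClosedFieldType.

Lemma psd1 : psd (1%:M : 'M[C]_1).
Proof.
split; first exact: adjmx1.
move=> v; rewrite mulmx1 !mxE; apply: sumr_ge0 => k _.
by rewrite !mxE mulrC mul_conjC_ge0.
Qed.

(* The vectors sqrt(s_l) u_l of the spectral decomposition
   G = sum_l s_l u_l u_l^*. *)
Definition psd_factor n (G : 'M[C]_n) (l : 'I_n) : 'cV[C]_n :=
  sqrtC (spectral_diag G 0 l) *: adjmx (row l (spectralmx G)).

Lemma psd_sum_factor n (G : 'M[C]_n) : psd G ->
  G = \sum_l psd_factor G l *m adjmx (psd_factor G l).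
Proof.
move=> [Gh Gpos].
have /orthomx_spectralP : G \is normalmx.
  by apply/eqP; rewrite /= -map_trmx -/(adjmx G) Gh.
set P := spectralmx G; set s := spectral_diag G => GE.
have iP : invmx P = adjmx P.
  by rewrite invmx_unitary ?spectral_unitarymx // /adjmx map_trmx.
have PPt : P *m adjmx P = 1%:M.
  by move/unitarymxP: (spectral_unitarymx G); rewrite /adjmx map_trmx.
have s_ge0 l : 0 <= s 0 l.
  have := Gpos (adjmx (row l P)); rewrite adjmxK.
  have -> : (row l P *m G *m adjmx (row l P)) 0 0 = (P *m G *m adjmx P) l l.
    rewrite !mxE; apply: eq_bigr => k _; rewrite !mxE; congr (_ * _).
    by apply: eq_bigr => t _; rewrite !mxE.
  rewrite {1}GE iP !mulmxA PPt mul1mx -mulmxA PPt mulmx1.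
  by rewrite !mxE eqxx mulr1n.
rewrite {1}GE iP; apply/matrixP => i j.
rewrite summxE mul_mx_diag mxE; apply: eq_bigr => l _.
rewrite !mxE big_ord1 !mxE.
have sqrt_real : (sqrtC (s 0 l))^* = sqrtC (s 0 l) by rewrite geC0_conj // sqrtC_ge0.
rewrite rmorphM /= sqrt_real conjCK mulrACA -expr2 sqrtCK.
by rewrite mulrAC mulrC.
Qed.

End PositiveSemidefinite.

Section Instruments.
Variable C : numClosedFieldType.

Lemma instr_adj_sum din dout (I J : finType) m (K : I -> 'I_m -> 'M[C]_(dout, din))
  i (G : J -> 'M[C]_dout) :
  instr_adj K i (\sum_j G j) = \sum_j instr_adj K i (G j).
Proof.
rewrite /instr_adj exchange_big; apply: eq_bigr => k _.
by rewrite mulmx_sumr mulmx_suml.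
Qed.

Lemma instrumentE din dout (I : finType) m (K : I -> 'I_m -> 'M[C]_(dout, din)) :
  instrument K <-> \sum_i instr_adj K i 1%:M = 1%:M.
Proof.
suff -> : \sum_i instr_adj K i 1%:M = \sum_i \sum_k adjmx (K i k) *m K i k by [].
by apply: eq_bigr => i _; apply: eq_bigr => k _; rewrite mulmx1.
Qed.

Section CastKraus.
Variables (din dout dout' : nat) (e : dout = dout') (I : finType) (m : nat).
Variable K : I -> 'I_m -> 'M[C]_(dout, din).

Let castK i k := castmx (e, erefl din) (K i k).

Lemma instr_adj_castmx i (Y : 'M[C]_dout') :
  instr_adj castK i Y = instr_adj K i (castmx (esym e, esym e) Y).
Proof. by apply: eq_bigr => k _; rewrite adjmx_castmx_conj. Qed.

Lemma instrument_castmx : instrument K -> instrument castK.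
Proof.
move/instrumentE => K_instr; apply/instrumentE; rewrite -K_instr.
apply: eq_bigr => i _.
by rewrite instr_adj_castmx castmx1.
Qed.

End CastKraus.

Section AbsorbPOVM.
Variables (dQ dQ' dA : nat).

Definition contract_memory (v : 'cV[C]_dA) (K0 : 'M[C]_(dQ * dA, dQ')) :
  'M[C]_(dQ, dQ') :=
  castmx (muln1 dQ, erefl dQ') (((1%:M : 'M[C]_dQ) *t adjmx v) *m K0).

Lemma contract_memory_conj (v : 'cV[C]_dA) (K0 : 'M[C]_(dQ * dA, dQ')) (Y : 'M[C]_dQ) :
  adjmx (contract_memory v K0) *m Y *m contract_memory v K0
  = adjmx K0 *m (Y *t (v *m adjmx v)) *m K0.
Proof.
rewrite adjmx_castmx_conj -tensmx1.
rewrite adjmxM adjmx_tens adjmx1 adjmxK.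
rewrite -!mulmxA; congr (_ *m _); rewrite !mulmxA; congr (_ *m _).
by rewrite !tensmx_mul mul1mx !mulmx1.
Qed.

Variables (I J : finType) (m : nat).
Variables (K : I -> 'I_m -> 'M[C]_(dQ * dA, dQ')) (F : I -> J -> 'M[C]_dA).

Definition absorb_povm (ij : I * J) (kl : 'I_(m * dA)) : 'M[C]_(dQ, dQ') :=
  contract_memory (psd_factor (F ij.1 ij.2) (mxtens_unindex kl).2)
    (K ij.1 (mxtens_unindex kl).1).

Lemma instr_adj_absorb_povm i j (Y : 'M[C]_dQ) : psd (F i j) ->
  instr_adj absorb_povm (i, j) Y = instr_adj K i (Y *t F i j).
Proof.
move=> F_psd; rewrite /instr_adj /absorb_povm /=.
rewrite (big_mxtens_unindex (fun k l =>
  adjmx (contract_memory (psd_factor (F i j) l) (K i k)) *m Y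
    *m contract_memory (psd_factor (F i j) l) (K i k))).
apply: eq_bigr => k _.
rewrite [in RHS](psd_sum_factor F_psd) tensmx_sumr mulmx_sumr mulmx_suml.
by apply: eq_bigr => l _; rewrite contract_memory_conj.
Qed.

Lemma instrument_absorb_povm :
  instrument K -> (forall i, POVM (F i)) -> instrument absorb_povm.
Proof.
move=> /instrumentE K_instr F_povm; apply/instrumentE; rewrite -K_instr sum_pair.
apply: eq_bigr => i _; have [F_psd sumF] := F_povm i.
under eq_bigr do rewrite instr_adj_absorb_povm //.
by rewrite -instr_adj_sum -tensmx_sumr sumF tensmx11.
Qed.

End AbsorbPOVM.

End Instruments.

Section Distributions.
Variable C : numClosedFieldType.

Lemma prob_dist_card_gt0 (T : finType) (p : T -> C) : prob_dist p -> (0 < #|T|)%N.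
Proof.
move=> [_ sum1]; rewrite lt0n; apply/negP => /eqP/card0_eq T0.
move: sum1; rewrite big_pred0 => [/eqP | t]; last by have := T0 t.
by rewrite eq_sym oner_eq0.
Qed.

Lemma prob_dist_fst (X : finType) (p : X -> C) :
  prob_dist p -> prob_dist (fun xu : X * unit => p xu.1).
Proof.
move=> [p_ge0 sum1]; split=> [xu | ]; first exact: p_ge0.
by rewrite -sum1 sum_pair; apply: eq_bigr => x _; rewrite big_unit.
Qed.

Lemma prob_dist_marginal (X W : finType) (p : X * W -> C) :
  prob_dist p -> prob_dist (fun x => \sum_w p (x, w)).
Proof.
move=> [p_ge0 sum1]; split=> [x | ]; last by rewrite -sum1 sum_pair.
by apply: sumr_ge0 => w _; exact: p_ge0.
Qed.

(* When all weights vanish, an arbitrary [q t] is returned so that the result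
   is still a distribution. *)
Definition cond_mix (T B : finType) (wt : T -> C) (q : T -> B -> C) : B -> C :=
  if \sum_t wt t == 0 then (if [pick t] is Some t then q t else fun _ => 0)
  else fun b => (\sum_t wt t * q t b) / \sum_t wt t.

Variables (T B : finType) (wt : T -> C) (q : T -> B -> C).
Hypothesis wt_ge0 : forall t, 0 <= wt t.

Lemma cond_mixM b : cond_mix wt q b * \sum_t wt t = \sum_t wt t * q t b.
Proof.
rewrite /cond_mix; case: eqP => [wt0 | wt_neq0]; last by rewrite divfK //; apply/eqP.
rewrite wt0 mulr0; symmetry; apply: big1 => t _.
by rewrite (psumr_eq0P (fun t _ => wt_ge0 t) wt0) ?mul0r.
Qed.

Lemma cond_mix_prob_dist :
  (0 < #|T|)%N -> (forall t, prob_dist (q t)) -> prob_dist (cond_mix wt q).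
Proof.
move=> T_gt0 q_dist; rewrite /cond_mix; case: eqP => [_ | wt_neq0].
  case: pickP => [t _ | T0]; first exact: q_dist.
  by case/card_gt0P: T_gt0 => t _; have := T0 t.
split=> [b | ].
  apply: divr_ge0; last exact: sumr_ge0.
  by apply: sumr_ge0 => t _; apply: mulr_ge0; [exact: wt_ge0 | case: (q_dist t)].
rewrite -mulr_suml exchange_big /=.
under eq_bigr do rewrite -mulr_sumr (proj2 (q_dist _)) mulr1.
by rewrite mulfV //; apply/eqP.
Qed.

End Distributions.

Section Conversions.
Variables (C : numClosedFieldType) (dQ dQ' : nat) (X A Y B : finType).
Variables (M : X -> A -> 'M[C]_dQ) (N : Y -> B -> 'M[C]_dQ').

Lemma succeq_oneway_LOCC : pmd_succeq M N -> oneway_LOCC_convertible M N.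
Proof.
move=> [Rr [mu [I [m [K [p [q [mu_dist [K_instr [p_dist [q_dist N_eq]]]]]]]]]]].
exists Rr, mu, 1%N, I, m,
  (fun r i k => castmx (esym (muln1 dQ), erefl dQ') (K r i k)),
  unit, (fun i y r xw => p i y r xw.1), unit, (fun r i j => 1%:M : 'M[C]_1),
  (fun a x w i j y r b => q a x i y r b).
refine (conj mu_dist (conj _ (conj _ (conj _ (conj _ _))))) => //.
- by move=> r; apply: instrument_castmx.
- by move=> i y r; apply: prob_dist_fst.
- by move=> r i; split=> [j | ]; [exact: psd1 | rewrite big_unit].
move=> y b; rewrite N_eq; apply: eq_bigr => r _; congr (_ *: _).
apply: eq_bigr => i _; rewrite sum_pair; apply: eq_bigr => x _.
rewrite big_unit; apply: eq_bigr => a _.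
by rewrite big_unit instr_adj_castmx tensmx1 castmx_comp castmx_id.
Qed.

Lemma oneway_LOCC_succeq : oneway_LOCC_convertible M N -> pmd_succeq M N.
Proof.
move=> [Rr [mu [dA [I [m [K [W [p [J [F [q
  [mu_dist [K_instr [p_dist [F_povm [q_dist N_eq]]]]]]]]]]]]]]]].
pose wt i y r x w := p i y r (x, w).
have wt_ge0 i y r x w : 0 <= wt i y r x w.
  by case: (p_dist i y r) => p_ge0 _; exact: p_ge0.
pose qq a x (ij : I * J) y r :=
  cond_mix (wt ij.1 y r x) (fun w => q a x w ij.1 ij.2 y r).
exists Rr, mu, (I * J)%type, (m * dA)%N, (fun r => absorb_povm (K r) (F r)),
  (fun ij y r x => \sum_w wt ij.1 y r x w), qq.
refine (conj mu_dist (conj _ (conj _ (conj _ _)))).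
- by move=> r; apply: instrument_absorb_povm.
- by move=> [i j] y r; apply: prob_dist_marginal.
- move=> a x [i j] y r.
  apply: cond_mix_prob_dist => [w | | w]; [exact: wt_ge0 | | exact: q_dist].
  by have := prob_dist_card_gt0 (p_dist i y r); rewrite card_prod muln_gt0 => /andP[].
move=> y b; rewrite N_eq; apply: eq_bigr => r _; congr (_ *: _).
have F_psd i j : psd (F r i j) by case: (F_povm r i) => F_psd _; exact: F_psd.
rewrite [RHS]sum_pair; apply: eq_bigr => i _.
under [RHS]eq_bigr => j _ do under eq_bigr => x _ do under eq_bigr => a _ do
  rewrite /= cond_mixM // instr_adj_absorb_povm // scaler_suml.
rewrite [LHS]sum_pair.
under [LHS]eq_bigr => x _ do under eq_bigr => w _ do rewrite exchange_big.
under [LHS]eq_bigr => x _ do rewrite exchange_big.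
rewrite [LHS]exchange_big; apply: eq_bigr => j _; apply: eq_bigr => x _.
rewrite [LHS]exchange_big; apply: eq_bigr => a _; apply: eq_bigr => w _.
by rewrite mulrC.
Qed.

End Conversions.

Theorem proposition1 (C : numClosedFieldType) (dQ dQ' : nat)
  (X A Y B : finType)
  (M : X -> A -> 'M[C]_dQ) (N : Y -> B -> 'M[C]_dQ') :
  PMD M -> PMD N ->
  (pmd_succeq M N <-> oneway_LOCC_convertible M N).
Proof.
move=> _ _; split; [exact: succeq_oneway_LOCC | exact: oneway_LOCC_succeq].
Qed.
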